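(* Let $G$ be a digraph and $f$ a discrete Morse function on $G$, and let $\gamma$ be an allowed elementary $n$-path in $G$. Then the following two conditions cannot both hold: (i'') there exists an allowed elementary $(n-1)$-path $\beta<\gamma$ with $f(\beta)=f(\gamma)$; (ii'') there exists an allowed elementary $(n+1)$-path $\alpha>\gamma$ with $f(\alpha)=f(\gamma)$.
   Context: A digraph $G=(V,E)$ consists of a set $V$ and $E\subseteq(V\times V)\setminus\{(v,v)\}$; $(u,v)\in E$ is written $u\to v$. An allowed elementary $n$-path is a sequence $v_0\cdots v_n$ of vertices with $v_{i-1}\to v_i\in E$ for $1\le i\le n$. For allowed elementary paths, $\gamma'<\gamma$ (or $\gamma>\gamma'$) means $\gamma'$ is obtained from $\gamma$ by deleting some entries. A map $f:V\to[0,+\infty)$ is a discrete Morse function on $G$ if for every allowed elementary path $v_0\cdots v_n$: (i) there is at most one index $i$ with $f(v_i)=0$ such that $v_0\cdots v_{i-1}v_{i+1}\cdots v_n$ is an allowed elementary $(n-1)$-path; (ii) there is at most one vertex $u$ with $f(u)=0$ such that for some $-1\le j\le n$ the sequence $v_0\cdots v_juv_{j+1}\cdots v_n$ (meaning $uv_0\cdots v_n$ if $j=-1$, $v_0\cdots v_nu$ if $j=n$) is an allowed elementary $(n+1)$-path. Set $f(v_0\cdots v_n)=\sum_if(v_i)$. *)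

From Stdlib Require Import Reals List Arith.
Import ListNotations.
Open Scope R_scope.

Section Digraph.
Variable V : Type.
Variable E : V -> V -> Prop.

Fixpoint chain (l : list V) : Prop :=
  match l with
  | x :: ((y :: _) as t) => E x y /\ chain t
  | _ => True
  end.

Definition allowed_path (n : nat) (l : list V) : Prop :=
  length l = S n /\ chain l.

(* gamma' < gamma : gamma' is obtained from gamma by deleting some entries *)
Inductive deleted_from : list V -> list V -> Prop :=
  | df_nil : deleted_from [] []
  | df_keep : forall x l l', deleted_from l' l -> deleted_from (x :: l') (x :: l)
  | df_drop : forall x l l', deleted_from l' l -> deleted_from l' (x :: l).

Definition remove_at (i : nat) (l : list V) : list V :=
  firstn i l ++ skipn (S i) l.

(* insertion of u at position j (0 <= j <= length l); j corresponds to the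
   paper's index j-1 in {-1,...,n} *)
Definition insert_at (j : nat) (u : V) (l : list V) : list V :=
  firstn j l ++ u :: skipn j l.

Variable f : V -> R.

Definition path_val (l : list V) : R := fold_right (fun v acc => f v + acc) 0 l.

Definition is_discrete_morse : Prop :=
  (forall v, 0 <= f v) /\
  forall (n : nat) (l : list V), allowed_path n l ->
    (forall i i' v v',
        nth_error l i = Some v -> f v = 0 ->
        (exists m, S m = n /\ allowed_path m (remove_at i l)) ->
        nth_error l i' = Some v' -> f v' = 0 ->
        (exists m, S m = n /\ allowed_path m (remove_at i' l)) ->
        i = i') /\
    (forall u u',
        f u = 0 -> (exists j, (j <= S n)%nat /\ allowed_path (S n) (insert_at j u l)) ->
        f u' = 0 -> (exists j, (j <= S n)%nat /\ allowed_path (S n) (insert_at j u' l)) ->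
        u = u').
End Digraph.

(** Deleting a vertex [v] from [gamma] without changing [f] forces [f v = 0],
    and so does inserting a vertex [u].  Then [alpha] contains the two
    zero-valued vertices [u] and [v], and each of them can be deleted from a
    suitable subpath of [alpha] leaving an allowed path: all of [alpha] when
    [u] and [v] are not adjacent (the arrow bridging the gap left by [v] is
    supplied by [beta]), and the prefix ending with, or the suffix starting
    with, the pair [u], [v] when they are.  Two such indices in one path are
    forbidden by condition (i). *)

From Stdlib Require Import Reals List Arith Lia Lra.
Import ListNotations.
Open Scope R_scope.

Section Chains.
Variable V : Type.
Variable E : V -> V -> Prop.

Lemma chain_cons_inv (x : V) l : chain V E (x :: l) -> chain V E l.
Proof. destruct l; simpl; tauto. Qed.

Lemma chain_app_l (A B : list V) : chain V E (A ++ B) -> chain V E A.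
Proof.
  induction A as [|a [|a' A] IH]; simpl; auto.
  intros [Haa' H]. split; [exact Haa' | apply IH, H].
Qed.

Lemma chain_app_r (A B : list V) : chain V E (A ++ B) -> chain V E B.
Proof.
  induction A as [|a A IH]; simpl; auto.
  intros H. apply IH, (chain_cons_inv a), H.
Qed.

Lemma chain_app_cons (A B : list V) (x : V) :
  chain V E (A ++ x :: B) <-> chain V E (A ++ [x]) /\ chain V E (x :: B).
Proof.
  induction A as [|a [|a' A] IH]; simpl in *.
  - destruct B; simpl; tauto.
  - destruct B; simpl; tauto.
  - rewrite IH. tauto.
Qed.

End Chains.

Section Deletion.
Variable V : Type.

Lemma deleted_from_length (a b : list V) :
  deleted_from V a b -> (length a <= length b)%nat.
Proof. induction 1; simpl; lia. Qed.

Lemma deleted_from_same_length (a b : list V) :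
  deleted_from V a b -> length a = length b -> a = b.
Proof.
  induction 1; simpl; intros Hlen.
  - reflexivity.
  - f_equal; auto.
  - apply deleted_from_length in H. lia.
Qed.

Lemma deleted_from_single (a b : list V) :
  deleted_from V a b -> length b = S (length a) ->
  exists L x R, b = L ++ x :: R /\ a = L ++ R.
Proof.
  induction 1; simpl; intros Hlen.
  - discriminate.
  - destruct IHdeleted_from as (L & y & R & -> & ->); [lia|].
    exists (x :: L), y, R. auto.
  - exists [], x, l. simpl. split; auto.
    apply deleted_from_same_length; auto. lia.
Qed.

Lemma remove_at_middle (A B : list V) (x : V) :
  remove_at V (length A) (A ++ x :: B) = A ++ B.
Proof. unfold remove_at. induction A; simpl; f_equal; auto. Qed.

Lemma nth_error_middle (A B : list V) (x : V) :
  nth_error (A ++ x :: B) (length A) = Some x.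
Proof. induction A; simpl; auto. Qed.

Variable f : V -> R.

Lemma path_val_app_cons (A B : list V) (x : V) :
  path_val V f (A ++ x :: B) = path_val V f (A ++ B) + f x.
Proof. induction A; simpl; [lra|]. rewrite IHA. lra. Qed.

Lemma deleted_from_same_value (a b : list V) :
  deleted_from V a b -> length b = S (length a) ->
  path_val V f a = path_val V f b ->
  exists L x R, b = L ++ x :: R /\ a = L ++ R /\ f x = 0.
Proof.
  intros Hdel Hlen Hval.
  destruct (deleted_from_single _ _ Hdel Hlen) as (L & x & R & -> & ->).
  exists L, x, R. repeat split.
  rewrite path_val_app_cons in Hval. lra.
Qed.

End Deletion.

Section Morse.
Variable V : Type.
Variable E : V -> V -> Prop.
Variable f : V -> R.
Hypothesis Hf : is_discrete_morse V E f.

Lemma morse_two_zero_deletions A x B y C :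
  chain V E (A ++ x :: B ++ y :: C) -> f x = 0 -> f y = 0 ->
  chain V E (A ++ B ++ y :: C) -> chain V E (A ++ x :: B ++ C) -> False.
Proof.
  intros Hw Hx Hy Hdel_x Hdel_y.
  set (k := (length A + length B + length C)%nat).
  set (w := A ++ x :: B ++ y :: C).
  assert (Hw_split : w = (A ++ x :: B) ++ y :: C)
    by (unfold w; rewrite <- app_assoc; reflexivity).
  assert (Hw_allowed : allowed_path V E (S k) w).
  { split; [|exact Hw]. unfold w, k.
    repeat rewrite length_app, ?length_cons; lia. }
  destruct Hf as [_ Hmorse].
  destruct (Hmorse _ _ Hw_allowed) as [Hunique _].
  assert (Hpos : length A = length (A ++ x :: B)).
  { apply (Hunique _ _ x y).
    - apply nth_error_middle.
    - exact Hx.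
    - exists k. split; auto. unfold w. rewrite remove_at_middle.
      split; [|exact Hdel_x]. unfold k.
      repeat rewrite length_app, ?length_cons; lia.
    - rewrite Hw_split. apply nth_error_middle.
    - exact Hy.
    - exists k. split; auto. rewrite Hw_split, remove_at_middle, <- app_assoc.
      split; [|exact Hdel_y]. unfold k.
      repeat rewrite length_app, ?length_cons; lia. }
  repeat rewrite length_app, ?length_cons in Hpos; lia.
Qed.

Lemma adjacent_zeros_first_undeletable P x y Z :
  chain V E (P ++ x :: y :: Z) -> f x = 0 -> f y = 0 ->
  chain V E (P ++ y :: Z) -> False.
Proof.
  intros Hw Hx Hy Hdel.
  apply (morse_two_zero_deletions P x [] y []); simpl; auto.
  - apply (chain_app_l _ _ _ Z). rewrite <- app_assoc. exact Hw.
  - apply (chain_app_l _ _ _ Z). rewrite <- app_assoc. exact Hdel.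
  - apply (chain_app_l _ _ _ (y :: Z)). rewrite <- app_assoc. exact Hw.
Qed.

Lemma adjacent_zeros_second_undeletable P x y Z :
  chain V E (P ++ x :: y :: Z) -> f x = 0 -> f y = 0 ->
  chain V E (P ++ x :: Z) -> False.
Proof.
  intros Hw Hx Hy Hdel.
  apply (morse_two_zero_deletions [] x [] y Z); simpl; auto.
  - exact (chain_app_r _ _ _ _ Hw).
  - exact (chain_cons_inv _ _ _ _ (chain_app_r _ _ _ _ Hw)).
  - exact (chain_app_r _ _ _ _ Hdel).
Qed.

(** [gamma = L ++ v :: R] loses [v] to give [beta = L ++ R], and gains [u] to
    give [alpha = L' ++ u :: R']. *)
Lemma zero_deletion_and_insertion_absurd L v R L' u R' :
  L' ++ R' = L ++ v :: R ->
  chain V E (L ++ R) -> chain V E (L ++ v :: R) -> chain V E (L' ++ u :: R') ->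
  f u = 0 -> f v = 0 -> False.
Proof.
  intros Hsplit Hbeta Hgamma Halpha Hu Hv.
  destruct (app_eq_app _ _ _ _ Hsplit) as [M [[-> HR] | [-> ->]]].
  - destruct M as [|v' M]; simpl in HR.
    + subst R'. rewrite app_nil_r in Halpha.
      exact (adjacent_zeros_first_undeletable _ _ _ _ Halpha Hu Hv Hgamma).
    + injection HR as <- ->.
      rewrite <- app_assoc in Halpha. simpl in Halpha.
      destruct M as [|m M]; simpl in *.
      * exact (adjacent_zeros_second_undeletable _ _ _ _ Halpha Hv Hu Hgamma).
      * apply (morse_two_zero_deletions L v (m :: M) u R'); auto.
        apply chain_app_cons. split.
        -- exact (proj1 (proj1 (chain_app_cons _ _ _ _ _) Hbeta)).
        -- exact (chain_cons_inv _ _ _ _ (chain_app_r _ _ _ _ Halpha)).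
  - rewrite <- app_assoc in Hgamma, Hbeta.
    destruct M as [|m M]; simpl in *.
    + exact (adjacent_zeros_first_undeletable _ _ _ _ Halpha Hu Hv Hgamma).
    + apply (morse_two_zero_deletions L' u (m :: M) v R); auto.
      apply chain_app_cons. split.
      * exact (proj1 (proj1 (chain_app_cons _ _ _ _ _) Halpha)).
      * pose proof (chain_app_r _ _ _ _ Halpha) as Hsuffix. simpl in Hsuffix.
        split; [tauto|]. exact (chain_app_r _ _ _ _ Hbeta).
Qed.

End Morse.

Theorem lemma4p4 (V : Type) (E : V -> V -> Prop)
  (E_irrefl : forall v, ~ E v v) (f : V -> R)
  (Hf : is_discrete_morse V E f)
  (n : nat) (gamma : list V) (Hgamma : allowed_path V E n gamma) :
  ~ ((exists beta, (exists m, S m = n /\ allowed_path V E m beta) /\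
        deleted_from V beta gamma /\ path_val V f beta = path_val V f gamma) /\
     (exists alpha, allowed_path V E (S n) alpha /\
        deleted_from V gamma alpha /\ path_val V f alpha = path_val V f gamma)).
Proof.
  intros [[beta [[m [<- [Hbeta_len Hbeta]]] [Hbeta_del Hbeta_val]]]
          [alpha [[Halpha_len Halpha] [Halpha_del Halpha_val]]]].
  destruct Hgamma as [Hgamma_len Hgamma].
  destruct (deleted_from_same_value V f _ _ Hbeta_del ltac:(lia) Hbeta_val)
    as (L & v & R & -> & -> & Hv).
  destruct (deleted_from_same_value V f _ _ Halpha_del ltac:(lia)
              (eq_sym Halpha_val)) as (L' & u & R' & -> & Hsplit & Hu).
  exact (zero_deletion_and_insertion_absurd V E f Hf L v R L' u R'
           (eq_sym Hsplit) Hbeta Hgamma Halpha Hu Hv).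
Qed.
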